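(* Let $H=E+D$ and $K=E'+D'$ be closed additive subgroups of $\mathbb{R}^{n}$ (with decompositions as in the context) and let $f:H\to K$ be a homomorphism of closed additive groups. Then: (i) if $f$ is injective, $|\widetilde{\mathrm{dim}}(H)|\leq|\widetilde{\mathrm{dim}}(K)|$; (ii) if $f$ is surjective, $|\widetilde{\mathrm{dim}}(H)|\geq|\widetilde{\mathrm{dim}}(K)|$; (iii) if $f$ is invertible, $\widetilde{\mathrm{dim}}(H)=\widetilde{\mathrm{dim}}(K)$; (iv) $f(H)$ is a closed additive subgroup of $K$; (v) for every closed subgroup $L$ of $K$, $f^{-1}(L)$ is a closed additive subgroup of $H$.
   Context: Every closed additive subgroup $H$ of $\mathbb{R}^n$ can be written $H=E+D$ with $E$ a vector subspace and $D$ a discrete additive subgroup with $E\cap\mathrm{vect}(D)=\{0\}$ ($\mathrm{vect}$ = real span); such decompositions $H=E+D$, $K=E'+D'$ are fixed. A map $f:H\to K$ is a homomorphism of closed additive groups if $f=f_1\oplus f_2$ with $f_1:E\to E'$ linear and $f_2:D\to D'$ a group homomorphism, i.e. $f(\lambda x+ py)=\lambda f_1(x)+pf_2(y)$ for all $\lambda\in\mathbb{R}$, $p\in\mathbb{Z}$, $x\in E$, $y\in D$. It is an isomorphism of closed additive groups if it is invertible. For an additive subgroup $G$, $\widetilde{\mathrm{dim}}(G):=p+i(q-p)$ where $p=\max\{\dim V: V\text{ a vector subspace},\ V\subset G\}$, $q=\dim\mathrm{vect}(G)$; $|\cdot|$ is the complex modulus. *)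

From HB Require Import structures.
From mathcomp Require Import all_boot all_order all_algebra.
From mathcomp Require Import all_classical all_reals all_analysis.
From mathcomp Require Import complex.
Set Implicit Arguments. Unset Strict Implicit. Unset Printing Implicit Defensive.
Import Order.TTheory GRing.Theory Num.Theory.
Import numFieldNormedType.Exports.
Local Open Scope classical_set_scope.
Local Open Scope ring_scope.

Section Defs.
Variables (R : realType) (n : nat).
Notation vec := 'rV[R]_n.

Definition is_add_subgroup (G : set vec) : Prop :=
  G 0 /\ (forall x y, G x -> G y -> G (x - y)).

Definition is_closed_subgroup (G : set vec) : Prop :=
  is_add_subgroup G /\ closed G.

Definition is_subspace (V : set vec) : Prop :=
  V 0 /\ (forall (a : R) x y, V x -> V y -> V (a *: x + y)).

Definition is_discrete_subgroup (D : set vec) : Prop :=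
  is_add_subgroup D /\ (forall x, D x -> \forall y \near x, D y -> y = x).

Definition vect (G : set vec) : set vec :=
  [set v | exists s : seq vec, (forall x, x \in s -> G x) /\ v \in span s].

Definition dimS (V : set vec) : nat :=
  \max_(k < n.+1 | `[< exists s : seq vec,
        size s = k /\ (forall x, x \in s -> V x) /\ free s >]) k.

Definition pdim (G : set vec) : nat :=
  \max_(k < n.+1 | `[< exists V : set vec,
        is_subspace V /\ V `<=` G /\ dimS V = k >]) k.

Definition qdim (G : set vec) : nat := dimS (vect G).

Definition dimt (G : set vec) : R[i] :=
  ((pdim G)%:R +i* ((qdim G)%:R - (pdim G)%:R))%C.

Definition sumset (E D : set vec) : set vec :=
  [set z | exists x y, E x /\ D y /\ z = x + y].

Definition is_decomp (H E D : set vec) : Prop :=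
  is_subspace E /\ is_discrete_subgroup D /\
  E `&` vect D = [set 0] /\ H = sumset E D.

Definition is_cag_hom (E D E' D' : set vec) (f f1 f2 : vec -> vec) : Prop :=
  (forall x, E x -> E' (f1 x)) /\
  (forall (a : R) x y, E x -> E y -> f1 (a *: x + y) = a *: f1 x + f1 y) /\
  (forall y, D y -> D' (f2 y)) /\
  (forall x y, D x -> D y -> f2 (x + y) = f2 x + f2 y) /\
  (forall (l : R) (p : int) x y, E x -> D y ->
      f (l *: x + y *~ p) = l *: f1 x + f2 y *~ p).

End Defs.

(* A vector subspace contained in E + D lies in E: scaling x + y,
   y <> 0, by small factors would give nonzero elements of D arbitrarily close to 0.
   As the spans of E and D meet only in 0, this yields dim~(H) = dim E + i dim vect(D).
   If f = f1 + f2 is injective (resp. surjective), so are f1 : E -> E' and f2 : D -> D'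
   (for surjectivity, by uniqueness of the components in E' + D').  Linear maps compare
   dimensions as usual, and so do additive maps between discrete groups, because a
   Z-independent family in a discrete group is R-independent (a pigeonhole argument).
   Finally, nearby points of E + D have the same discrete component.  Hence E + D is
   closed; so is f(H) = f1(E) + f2(D), a set of the same shape inside E' + D'; and near
   each point of H the map f is a translate of the continuous map f1, so preimages of
   closed sets are closed. *)

From HB Require Import structures.
From mathcomp Require Import all_boot all_order all_algebra.
From mathcomp Require Import all_classical all_reals all_analysis.
From mathcomp Require Import complex.
From mathcomp Require Import lra.
Import Order.TTheory GRing.Theory Num.Theory.
Import numFieldNormedType.Exports.
Local Open Scope classical_set_scope.
Local Open Scope ring_scope.

Section ClosedSubgroups.
Context {R : realType} {n : nat}.
Local Notation vec := 'rV[R]_n.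
Implicit Types (S T G E D V : set vec) (s b : seq vec).

Lemma subgroup0 {G} : is_add_subgroup G -> G 0.
Proof. by case. Qed.

Lemma subgroupB {G x y} : is_add_subgroup G -> G x -> G y -> G (x - y).
Proof. by case=> _; apply. Qed.

Lemma subgroupN {G x} : is_add_subgroup G -> G x -> G (- x).
Proof. by move=> hG Gx; rewrite -sub0r; exact: subgroupB (subgroup0 hG) Gx. Qed.

Lemma subgroupD {G x y} : is_add_subgroup G -> G x -> G y -> G (x + y).
Proof. by move=> hG Gx Gy; rewrite -[y]opprK; exact: subgroupB Gx (subgroupN hG Gy). Qed.

Lemma subgroupMz {G x} (m : int) : is_add_subgroup G -> G x -> G (x *~ m).
Proof.
move=> hG Gx; have GMn k : G (x *+ k).
  by elim: k => [|k ih]; rewrite ?mulr0n ?mulrS; [exact: subgroup0 | exact: subgroupD].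
by case: m => k; rewrite ?NegzE ?mulrNz -pmulrn //; exact: subgroupN (GMn _).
Qed.

Lemma subgroup_sum {G} {I : Type} {r : seq I} {P : pred I} {F : I -> vec} :
  is_add_subgroup G -> (forall i, P i -> G (F i)) -> G (\sum_(i <- r | P i) F i).
Proof.
by move=> hG GF; apply: (big_ind G) => [|x y|]; [exact: subgroup0 | exact: subgroupD | ].
Qed.

Lemma subspace_subgroup {S} : is_subspace S -> is_add_subgroup S.
Proof. by case=> S0 SZD; split=> // x y Sx Sy; rewrite addrC -scaleN1r; exact: SZD. Qed.

Lemma subspaceZ {S x} (a : R) : is_subspace S -> S x -> S (a *: x).
Proof. by case=> S0 SZD Sx; rewrite -[_ *: x]addr0; exact: SZD. Qed.

Lemma vspace_subspace (U : {vspace vec}) : is_subspace [set v | v \in U].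
Proof. by split=> [|a x y Ux Uy]; rewrite /= ?mem0v // memvD ?memvZ. Qed.

Lemma subspace_span {S b v} : is_subspace S -> (forall x, x \in b -> S x) ->
  v \in <<b>>%VS -> S v.
Proof.
move=> hS bS /(coord_span (X := in_tuple b)) ->; have hG := subspace_subgroup hS.
apply: (big_ind S) => [|x y|i _].
- exact: subgroup0 hG.
- exact: subgroupD hG.
- by apply: (subspaceZ _ hS); apply: bS; exact: mem_nth.
Qed.

Definition additive_on G (g : vec -> vec) :=
  forall x y, G x -> G y -> g (x + y) = g x + g y.

Definition linear_on S (g : vec -> vec) :=
  forall (a : R) x y, S x -> S y -> g (a *: x + y) = a *: g x + g y.

Lemma linear_on_additive {S g} : linear_on S g -> additive_on S g.
Proof. by move=> hg x y Sx Sy; have := hg 1 x y Sx Sy; rewrite !scale1r. Qed.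

Lemma additive_on0 {G g} : is_add_subgroup G -> additive_on G g -> g 0 = 0.
Proof.
move=> hG hg; have := hg 0 0 (subgroup0 hG) (subgroup0 hG).
by rewrite addr0 => /(canLR (addrK _)); rewrite subrr.
Qed.

Lemma additive_onB {G g x y} : is_add_subgroup G -> additive_on G g ->
  G x -> G y -> g (x - y) = g x - g y.
Proof.
move=> hG hg Gx Gy; have := hg (x - y) y (subgroupB hG Gx Gy) Gy.
by rewrite subrK => ->; rewrite addrK.
Qed.

Lemma additive_onN {G g x} : is_add_subgroup G -> additive_on G g ->
  G x -> g (- x) = - g x.
Proof.
move=> hG hg Gx; rewrite -sub0r (additive_onB hG hg) ?(additive_on0 hG hg) ?sub0r //.
exact: subgroup0.
Qed.

Lemma additive_onMz {G g x} (m : int) : is_add_subgroup G -> additive_on G g ->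
  G x -> g (x *~ m) = g x *~ m.
Proof.
move=> hG hg Gx; have GMn k : G (x *+ k) by rewrite pmulrn; exact: subgroupMz.
have gMn k : g (x *+ k) = g x *+ k.
  elim: k => [|k ih]; first by rewrite !mulr0n (additive_on0 hG hg).
  by rewrite !mulrS hg ?ih.
by case: m => k; rewrite ?NegzE ?mulrNz -!pmulrn // (additive_onN hG hg) ?gMn.
Qed.

Lemma additive_on_sum {G g} {I : Type} {r : seq I} {F : I -> vec} :
  is_add_subgroup G -> additive_on G g -> (forall i, G (F i)) ->
  g (\sum_(i <- r) F i) = \sum_(i <- r) g (F i).
Proof.
move=> hG hg GF; elim: r => [|i r ih]; first by rewrite !big_nil (additive_on0 hG hg).
by rewrite !big_cons hg ?ih //; apply: subgroup_sum hG _ => j _.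
Qed.

Lemma linear_onZ {S g x} (a : R) : is_subspace S -> linear_on S g ->
  S x -> g (a *: x) = a *: g x.
Proof.
move=> hS hg Sx; have S0 := subgroup0 (subspace_subgroup hS).
have := hg a x 0 Sx S0; rewrite !addr0 => ->.
by rewrite (additive_on0 (subspace_subgroup hS) (linear_on_additive hg)) addr0.
Qed.

Lemma linear_on_image_subspace {S g} : is_subspace S -> linear_on S g -> is_subspace (g @` S).
Proof.
move=> hS hg; have hSg := subspace_subgroup hS; split.
  by exists 0; [exact: subgroup0 hSg | exact: additive_on0 hSg (linear_on_additive hg)].
move=> a _ _ [x Sx <-] [y Sy <-]; exists (a *: x + y); last exact: hg.
by case: hS => _; apply.
Qed.

Lemma additive_on_image_subgroup {G g} : is_add_subgroup G -> additive_on G g ->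
  is_add_subgroup (g @` G).
Proof.
move=> hG hg; split; first by exists 0; [exact: subgroup0 hG | exact: additive_on0 hG hg].
move=> _ _ [x Gx <-] [y Gy <-]; exists (x - y); first exact: subgroupB hG Gx Gy.
exact: additive_onB hG hg Gx Gy.
Qed.

Lemma nth_in_set {S s j} : S 0 -> (forall x, x \in s -> S x) -> S s`_j.
Proof.
move=> S0 sS; case: (ltnP j (size s)) => js; first by apply: sS; exact: mem_nth.
by rewrite nth_default.
Qed.

Lemma subspace_comb {S b} (k : nat -> R) : is_subspace S -> (forall x, x \in b -> S x) ->
  S (\sum_(0 <= j < size b) k j *: b`_j).
Proof.
move=> hS bS; have hSg := subspace_subgroup hS; apply: (subgroup_sum hSg) => j _.
exact: subspaceZ hS (nth_in_set (subgroup0 hSg) bS).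
Qed.

Lemma subgroup_combz {G b} (m : nat -> int) : is_add_subgroup G -> (forall x, x \in b -> G x) ->
  G (\sum_(0 <= j < size b) b`_j *~ m j).
Proof.
move=> hG bG; apply: (subgroup_sum hG) => j _.
exact: subgroupMz _ hG (nth_in_set (subgroup0 hG) bG).
Qed.

(** * Dimension *)

Lemma size_free_le s : free s -> (size s <= n)%N.
Proof. by move/eqP <-; have := dimvS (subvf (span s)); rewrite dimvf /dim /= mul1n. Qed.

Lemma dimS_ge_free {S s} : free s -> (forall x, x \in s -> S x) -> (size s <= dimS S)%N.
Proof.
move=> fs sS; have sn : (size s < n.+1)%N by rewrite ltnS size_free_le.
apply: (@leq_bigmax_cond _ _ (fun k : 'I_n.+1 => nat_of_ord k) (Ordinal sn)).
by apply/asboolP; exists s.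
Qed.

Lemma dimS_le_free S m :
  (forall s, free s -> (forall x, x \in s -> S x) -> (size s <= m)%N) -> (dimS S <= m)%N.
Proof. by move=> hm; apply/bigmax_leqP => k /asboolP [s [<- [sS fs]]]; exact: hm. Qed.

Lemma dimS_le_n S : (dimS S <= n)%N.
Proof. by apply: dimS_le_free => s fs _; exact: size_free_le. Qed.

Lemma dimS_subset S T : S `<=` T -> (dimS S <= dimS T)%N.
Proof. by move=> ST; apply: dimS_le_free => s fs sS; apply: dimS_ge_free => // x /sS /ST. Qed.

Definition is_basis S b :=
  [/\ forall x, x \in b -> S x, free b & forall x, S x -> x \in <<b>>%VS].

Lemma basis_exists S : exists b, is_basis S b.
Proof.
have [[b [sb bS fb]]|nob] :=
  pselect (exists b, [/\ size b = dimS S, forall x, x \in b -> S x & free b]).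
  exists b; split=> // x Sx; apply: contraT => xNb.
  have : (size (x :: b) <= dimS S)%N.
    apply: dimS_ge_free; first by rewrite free_cons xNb fb.
    by move=> y; rewrite inE => /predU1P[->|/bS].
  by rewrite /= sb ltnn.
have : (dimS S <= (dimS S).-1)%N.
  apply: dimS_le_free => s fs sS; rewrite -ltnS.
  have := dimS_ge_free fs sS; rewrite leq_eqVlt => /orP[/eqP sS_dim|]; last by case: (dimS S).
  by case: nob; exists s.
case: (dimS S) nob => [nob _|k _]; last by rewrite ltnn.
by case: nob; exists [::]; rewrite /free span_nil dimv0.
Qed.

Lemma dimS_basis {S b} : is_basis S b -> dimS S = size b.
Proof.
case=> bS fb Sb; apply/eqP; rewrite eqn_leq dimS_ge_free // andbT.
apply: dimS_le_free => s fs sS; rewrite -(eqP fb) -(eqP fs); apply: dimvS.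
by apply/span_subvP => x /sS /Sb.
Qed.

Lemma mem_vect {G x} : G x -> vect G x.
Proof.
move=> Gx; exists [:: x]; split; last by rewrite memv_span ?mem_head.
by move=> y; rewrite inE => /eqP ->.
Qed.

Lemma vect_subset {G G'} : G `<=` G' -> vect G `<=` vect G'.
Proof. by move=> GG' v [s [sG vs]]; exists s; split=> // x /sG /GG'. Qed.

Lemma vect_basis {G b} : is_basis G b -> vect G = [set v | v \in <<b>>%VS].
Proof.
case=> bG fb Gb; apply/seteqP; split=> [v [s [sG vs]]|v vb]; last by exists b.
by apply: subvP vs; apply/span_subvP => x /sG /Gb.
Qed.

Lemma vect_subspace G : is_subspace (vect G).
Proof. by have [b hb] := basis_exists G; rewrite (vect_basis hb); exact: vspace_subspace. Qed.

Lemma qdim_dimS G : qdim G = dimS G.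
Proof.
have [b hb] := basis_exists G; rewrite /qdim (vect_basis hb) (dimS_basis hb).
by case: hb => _ fb _; apply: dimS_basis; split=> // x; exact: memv_span.
Qed.

(** * Discrete subgroups *)

Definition zero_isolated G :=
  exists2 eps : R, 0 < eps & forall y, G y -> `|y| < eps -> y = 0.

Lemma discrete_zero_isolated {D} : is_discrete_subgroup D -> zero_isolated D.
Proof.
case=> [[D0 _] Dnear]; have /nbhs_ballP[e e0 eD] := Dnear 0 D0.
exists e => // y Dy ye; apply: eD Dy.
by rewrite -ball_normE /ball_ /= sub0r normrN.
Qed.

Lemma zero_isolated_subset {G G'} : G `<=` G' -> zero_isolated G' -> zero_isolated G.
Proof. by move=> GG' [e e0 hG']; exists e => // y /GG'; exact: hG'. Qed.

Lemma free_natP s : reflect (forall k : nat -> R,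
   \sum_(0 <= i < size s) k i *: s`_i = 0 -> forall i, (i < size s)%N -> k i = 0)
  (free s).
Proof.
apply: (iffP idP) => [/(freeP (X := in_tuple s)) fs k ks i si | hs].
  by apply: (fs (fun j => k j) _ (Ordinal si)); rewrite -[RHS]ks big_mkord.
apply/(freeP (X := in_tuple s)) => k ks i.
pose k' j := if insub j is Some o then k o else 0.
have := hs k' _ i (ltn_ord i); rewrite /k' valK; apply.
by rewrite big_mkord -[RHS]ks; apply: eq_bigr => j _; rewrite valK.
Qed.

Definition zfree s := forall m : nat -> int,
  \sum_(0 <= i < size s) s`_i *~ m i = 0 -> forall i, (i < size s)%N -> m i = 0.

Lemma free_zfree s : free s -> zfree s.
Proof.
move=> /free_natP fs m ms i si; apply/eqP; rewrite -(intr_eq0 R); apply/eqP.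
apply: (fs (fun j => (m j)%:~R)) => //; rewrite -[RHS]ms.
by apply: eq_bigr => j _; rewrite scaler_int.
Qed.

Lemma normr_entry_le (x : vec) a : `|x 0 a| <= `|x|.
Proof.
rewrite [`|x|]mx_normrE.
exact: (le_bigmax _ (fun ij : 'I_1 * 'I_n => `|x ij.1 ij.2|) (0, a)).
Qed.

Lemma normr_lt_entries (x : vec) e : 0 < e -> (forall a, `|x 0 a| < e) -> `|x| < e.
Proof.
by move=> e0 xe; rewrite [`|x|]mx_normrE; apply: bigmax_lt => // -[i a] _ /=; rewrite (ord1 i).
Qed.

Lemma truncn_eq_dist {u v : R} : 0 <= u -> 0 <= v -> Num.trunc u = Num.trunc v -> `|u - v| < 1.
Proof.
move=> u0 v0 uv; have := truncn_itv u0; have := truncn_itv v0; rewrite uv !mulrSr.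
by move=> /andP[? ?] /andP[? ?]; rewrite ltr_norml; apply/andP; split; lra.
Qed.

(* Pigeonhole: a grid of mesh [eps] puts two of sufficiently many points of the ball
   of radius [M] in the same cell, and then their difference is an element of [D] of
   norm less than [eps]. *)
Lemma zero_isolated_bounded_not_inj {D} (M : R) : is_add_subgroup D -> zero_isolated D ->
  exists N, forall g : 'I_N -> vec,
    (forall i, D (g i)) -> (forall i, `|g i| <= M) -> ~ injective g.
Proof.
move=> hD [eps e0 hsmall]; pose B := Num.trunc (2 * M / eps).
have cell_ok (c : R) : `|c| <= M ->
    0 <= (c + M) / eps /\ (Num.trunc ((c + M) / eps) < B.+1)%N.
  rewrite ler_norml => /andP[Mc cM]; split; first by rewrite divr_ge0 ?(ltW e0) //; lra.
  by rewrite ltnS le_truncn // ler_pM2r ?invr_gt0 //; lra.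
pose cell (x : vec) : {ffun 'I_n -> 'I_B.+1} :=
  [ffun a => inord (Num.trunc ((x 0 a + M) / eps))].
exists #|{ffun 'I_n -> 'I_B.+1}|.+1 => g gD gM ginj.
suff /leq_card : injective (cell \o g) by rewrite card_ord ltnn.
move=> i j /ffunP cij; apply: ginj; apply/eqP; rewrite -subr_eq0; apply/eqP.
apply: hsmall; first exact: subgroupB.
apply: normr_lt_entries => // a; have := cij a; rewrite !ffunE => /(congr1 val) /=.
have [gi0 giB] := cell_ok _ (le_trans (normr_entry_le (g i) a) (gM i)).
have [gj0 gjB] := cell_ok _ (le_trans (normr_entry_le (g j) a) (gM j)).
rewrite !inordK // => /(truncn_eq_dist gi0 gj0).
rewrite -mulrBl opprD addrACA subrr addr0 normrM [`|_^-1|]gtr0_norm ?invr_gt0 //.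
by rewrite ltr_pdivrMr // mul1r !mxE.
Qed.

(* If [sum_i k_i s_i = 0] with [k_i != 0], the points [sum_j floor (t k_j) s_j] of [D]
   stay in a fixed ball, while for [t = l / k_i] their [i]-th integer coefficient is [l],
   so they are pairwise distinct by Z-freeness. *)
Lemma zfree_free {D s} : is_add_subgroup D -> zero_isolated D ->
  (forall x, x \in s -> D x) -> zfree s -> free s.
Proof.
move=> hD Diso sD zs; apply/free_natP => k sk i si; apply/eqP; apply: contraT => ki0.
pose m t j := Num.floor (t * k j).
pose P t := \sum_(0 <= j < size s) s`_j *~ m t j.
have PD t : D (P t) by exact: subgroup_combz.
have PM t : `|P t| <= \sum_(0 <= j < size s) `|s`_j|.
  have -> : P t = \sum_(0 <= j < size s) ((m t j)%:~R - t * k j) *: s`_j.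
    under [RHS]eq_bigr do rewrite scalerBl -scalerA.
    by rewrite sumrB -scaler_sumr sk scaler0 subr0; apply: eq_bigr => j _; rewrite scaler_int.
  apply: le_trans (ler_norm_sum _ _ _) _; apply: ler_sum => j _; rewrite normrZ.
  apply: ler_piMl => //; have /andP[] := floor_itv (t * k j); rewrite intrD -/(m t j).
  by move=> ? ?; rewrite ler0_norm ?subr_le0 // opprB; lra.
have [N hN] := zero_isolated_bounded_not_inj (\sum_(0 <= j < size s) `|s`_j|) hD Diso.
exfalso; apply: (hN (fun l : 'I_N => P (l%:R / k i))) => // l1 l2 Pl.
have : \sum_(0 <= j < size s) s`_j *~ (m (l1%:R / k i) j - m (l2%:R / k i) j) = 0.
  by under eq_bigr do rewrite mulrzBr; rewrite sumrB; apply/eqP; rewrite subr_eq0; exact/eqP.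
move/zs/(_ i si); rewrite /m !divfK // !(intrKfloor (_%:Z)).
by move/eqP; rewrite subr_eq0 => /eqP [] /val_inj.
Qed.

Lemma lift_seq {S} {g : vec -> vec} {b} :
  (forall y, y \in b -> exists2 x, S x & g x = y) ->
  exists2 a, (forall x, x \in a -> S x) & map g a = b.
Proof.
elim: b => [|y b ih] lift; first by exists [::].
have [x Sx gx] := lift y (mem_head _ _).
have [a aS ga] : exists2 a, (forall x, x \in a -> S x) & map g a = b.
  by apply: ih => z zb; apply: lift; rewrite inE zb orbT.
by exists (x :: a); [move=> z; rewrite inE => /predU1P[->|/aS] | rewrite /= gx ga].
Qed.

Lemma linear_on_comb {S g b} (k : nat -> R) : is_subspace S -> linear_on S g ->
  (forall x, x \in b -> S x) ->
  g (\sum_(0 <= j < size b) k j *: b`_j) = \sum_(0 <= j < size b) k j *: (map g b)`_j.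
Proof.
move=> hS hg bS; have bjS j : S b`_j := nth_in_set (subgroup0 (subspace_subgroup hS)) bS.
rewrite (additive_on_sum (subspace_subgroup hS) (linear_on_additive hg)) => [|j].
  by apply: eq_big_nat => j /andP[_ jb]; rewrite (linear_onZ _ hS hg) // (nth_map 0).
exact: subspaceZ hS (bjS j).
Qed.

Lemma additive_on_combz {G g b} (m : nat -> int) : is_add_subgroup G -> additive_on G g ->
  (forall x, x \in b -> G x) ->
  g (\sum_(0 <= j < size b) b`_j *~ m j) = \sum_(0 <= j < size b) (map g b)`_j *~ m j.
Proof.
move=> hG hg bG; have bjG j : G b`_j := nth_in_set (subgroup0 hG) bG.
rewrite (additive_on_sum hG hg) => [|j]; last exact: subgroupMz _ hG (bjG j).
by apply: eq_big_nat => j /andP[_ jb]; rewrite (additive_onMz _ hG hg) // (nth_map 0).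
Qed.

Lemma dimS_le_linear_inj {S T g} : is_subspace S -> linear_on S g ->
  (forall x, S x -> T (g x)) -> (forall x y, S x -> S y -> g x = g y -> x = y) ->
  (dimS S <= dimS T)%N.
Proof.
move=> hS hg gT ginj; have hSg := subspace_subgroup hS.
have [b hb] := basis_exists S; rewrite (dimS_basis hb).
case: hb => bS /free_natP fb _; rewrite -(size_map g).
apply: dimS_ge_free; last by move=> _ /mapP[x xb ->]; exact/gT/bS.
apply/free_natP => k; rewrite size_map -(linear_on_comb k hS hg bS) => gk0.
apply: fb; apply: ginj; [exact: subspace_comb | exact: subgroup0 hSg |].
by rewrite gk0 (additive_on0 hSg (linear_on_additive hg)).
Qed.

Lemma dimS_le_linear_surj {S T g} : is_subspace S -> linear_on S g ->
  (forall y, T y -> exists2 x, S x & g x = y) -> (dimS T <= dimS S)%N.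
Proof.
move=> hS hg gsurj; have [b hb] := basis_exists T; rewrite (dimS_basis hb).
case: hb => bT /free_natP fb _; have [a aS ga] := lift_seq (fun y yb => gsurj y (bT y yb)).
rewrite -ga size_map in fb *; apply: (dimS_ge_free _ aS); apply/free_natP => k ak; apply: fb.
by rewrite -(linear_on_comb k hS hg aS) ak (additive_on0 (subspace_subgroup hS) (linear_on_additive hg)).
Qed.

Lemma dimS_le_additive_inj {G G' g} : is_add_subgroup G -> additive_on G g ->
  is_add_subgroup G' -> zero_isolated G' ->
  (forall x, G x -> G' (g x)) -> (forall x y, G x -> G y -> g x = g y -> x = y) ->
  (dimS G <= dimS G')%N.
Proof.
move=> hG hg hG' G'iso gG' ginj; have [b hb] := basis_exists G; rewrite (dimS_basis hb).
case: hb => bG /free_zfree zb _; rewrite -(size_map g).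
have gbG' : forall y, y \in map g b -> G' y by move=> _ /mapP[x xb ->]; exact/gG'/bG.
apply: (dimS_ge_free _ gbG'); apply: (zfree_free hG' G'iso gbG') => m.
rewrite size_map -(additive_on_combz m hG hg bG) => gm0; apply: zb.
apply: ginj; [exact: subgroup_combz | exact: subgroup0 hG |].
by rewrite gm0 (additive_on0 hG hg).
Qed.

Lemma dimS_le_additive_surj {G G' g} : is_add_subgroup G -> additive_on G g -> zero_isolated G ->
  (forall y, G' y -> exists2 x, G x & g x = y) -> (dimS G' <= dimS G)%N.
Proof.
move=> hG hg Giso gsurj; have [b hb] := basis_exists G'; rewrite (dimS_basis hb).
case: hb => bG' /free_zfree zb _; have [a aG ga] := lift_seq (fun y yb => gsurj y (bG' y yb)).
rewrite -ga size_map; apply: (dimS_ge_free _ aG).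
apply: (zfree_free hG Giso aG) => m am; have := zb m; rewrite -ga size_map; apply.
by rewrite -(additive_on_combz m hG hg aG) am (additive_on0 hG hg).
Qed.

(** * Closedness *)

Lemma closure_approx {A : set vec} {z} : closure A z ->
  forall e : R, 0 < e -> exists2 v, A v & `|z - v| < e.
Proof.
move=> zA e e0; have [v [Av zv]] := zA _ (nbhsx_ballx z e e0).
by exists v => //; move: zv; rewrite -ball_normE.
Qed.

Lemma approx_closure {A : set vec} {z} :
  (forall e : R, 0 < e -> exists2 v, A v & `|z - v| < e) -> closure A z.
Proof.
move=> zA B /nbhs_ballP[e e0 eB]; have [v Av zv] := zA e e0.
by exists v; split=> //; apply: eB; rewrite -ball_normE.
Qed.

Lemma lfun_bounded (h : 'End(vec)) : exists2 C : R, 0 < C & forall u, `|h u| <= C * `|u|.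
Proof.
exists (\sum_(j < n) `|h 'e_j| + 1) => [|u]; first by rewrite ltr_pwDr ?sumr_ge0.
rewrite {1}(row_sum_delta u) linear_sum /= mulrDl mul1r mulr_suml.
apply: le_trans (ler_norm_sum _ _ _) _.
apply: le_trans (_ : _ <= \sum_(j < n) `|h 'e_j| * `|u|) _; last by rewrite lerDl.
apply: ler_sum => j _; rewrite linearZ normrZ mulrC ler_wpM2l //; exact: normr_entry_le.
Qed.

(* [z] is the limit of points [v] of [U]; the projection onto [U] fixes them and is
   Lipschitz, so it also fixes [z]. *)
Lemma vspace_closed (U : {vspace vec}) : closed [set v | v \in U].
Proof.
move=> z zU /=; set p := projv U; have [C C0 hC] := lfun_bounded p.
suff -> : z = p z by apply: memv_proj.
apply/eqP; rewrite -subr_eq0 -normr_eq0 eq_le normr_ge0 andbT.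
apply/ler_addgt0Pr => e e0; rewrite add0r.
have [v Uv zv] := closure_approx zU (e / (1 + C)) (divr_gt0 e0 (addr_gt0 ltr01 C0)).
have -> : z - p z = (z - v) - p (z - v) by rewrite linearB /= (projv_id Uv) opprB addrA subrK.
apply: le_trans (ler_normB _ _) _; apply: le_trans (lerD (lexx _) (hC _)) _.
rewrite -{1}[`|z - v|]mul1r -mulrDl mulrC -ler_pdivlMr ?addr_gt0 //; exact: ltW.
Qed.

Lemma subspace_closed {S} : is_subspace S -> closed S.
Proof.
move=> hS; have [b [bS _ Sb]] := basis_exists S.
suff -> : S = [set v | v \in <<b>>%VS] by exact: vspace_closed.
by apply/seteqP; split=> [x /Sb|x /(subspace_span hS bS)].
Qed.

Lemma linear_on_extend {S g} : is_subspace S -> linear_on S g ->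
  exists h : 'End(vec), forall x, S x -> g x = h x.
Proof.
move=> hS hg; have [b [bS fb Sb]] := basis_exists S.
have [l gl] := linear_of_free b (map g b); have {}gl := gl fb (size_map _ _).
exists (linfun l) => x /Sb xb; rewrite (coord_span (X := in_tuple b) xb).
rewrite lfunE /= linear_sum /= (additive_on_sum (subspace_subgroup hS) (linear_on_additive hg)).
  apply: eq_bigr => i _; rewrite (linear_onZ _ hS hg) ?linearZ /=; last by apply: bS; exact: mem_nth.
  by rewrite -(nth_map 0 0 g (ltn_ord i)) -gl (nth_map 0).
by move=> i; apply: (subspaceZ _ hS); apply: bS; exact: mem_nth.
Qed.

Lemma linear_on_bounded {S g} : is_subspace S -> linear_on S g ->
  exists2 C : R, 0 < C & forall x, S x -> `|g x| <= C * `|x|.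
Proof.
move=> hS hg; have [h gh] := linear_on_extend hS hg; have [C C0 hC] := lfun_bounded h.
by exists C => // x Sx; rewrite gh.
Qed.

(** * Decompositions [E + D] *)

Lemma sumset_l {E D x} : is_add_subgroup D -> E x -> sumset E D x.
Proof. by move=> hD Ex; exists x, 0; rewrite addr0; split=> //; split=> //; exact: subgroup0. Qed.

Lemma sumset_r {E D y} : is_subspace E -> D y -> sumset E D y.
Proof.
move=> hE Dy; exists 0, y; rewrite add0r; split=> //.
exact: subgroup0 (subspace_subgroup hE).
Qed.

Lemma sumset_components_unique {E D x y x' y'} : is_subspace E -> E `&` vect D `<=` [set 0] ->
  E x -> E x' -> vect D y -> vect D y' -> x + y = x' + y' -> x = x' /\ y = y'.
Proof.
move=> hE ED Ex Ex' Dy Dy' e.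
have xx' : x - x' = y' - y.
  by apply: (addIr x'); rewrite subrK addrAC [y' + x']addrC -e addrK.
have /ED /eqP : (E `&` vect D) (x - x').
  split; first exact: subgroupB (subspace_subgroup hE) Ex Ex'.
  by rewrite xx'; exact: subgroupB (subspace_subgroup (vect_subspace D)) Dy' Dy.
by rewrite subr_eq0 => /eqP xE; split=> //; move: e; rewrite xE => /addrI.
Qed.

Lemma sumset_subgroup {E D} : is_subspace E -> is_add_subgroup D -> is_add_subgroup (sumset E D).
Proof.
move=> hE hD; have hEg := subspace_subgroup hE; split; first exact: sumset_l hD (subgroup0 hEg).
move=> _ _ [x [y [Ex [Dy ->]]]] [x' [y' [Ex' [Dy' ->]]]].
exists (x - x'), (y - y'); rewrite opprD addrACA; split; first exact: subgroupB hEg Ex Ex'.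
by split=> //; exact: subgroupB hD Dy Dy'.
Qed.

Section Decomposition.
Context {E D : set vec}.
Context (hE : is_subspace E) (hD : is_add_subgroup D) (ED : E `&` vect D `<=` [set 0]).

(* Scaling a vector [x + y] of a subspace inside [E + D] by a small factor makes its
   discrete component arbitrarily small, hence zero. *)
Lemma subspace_sub_sumset V : zero_isolated D -> is_subspace V -> V `<=` sumset E D -> V `<=` E.
Proof.
move=> [eps e0 hsmall] hV VED v Vv; have [x [y [Ex [Dy ev]]]] := VED v Vv.
suff y0 : y = 0 by rewrite ev y0 addr0.
pose t := eps / (`|y| + 1); have t0 : 0 < t by rewrite divr_gt0 // ltr_pwDr.
have [xt [yt [Ext [Dyt et]]]] := VED _ (subspaceZ t hV Vv).
have [_ yt_eq] : t *: x = xt /\ t *: y = yt.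
  apply: (sumset_components_unique hE ED (subspaceZ t hE Ex) Ext _ (mem_vect Dyt)).
    exact: subspaceZ (vect_subspace D) (mem_vect Dy).
  by rewrite -scalerDr -ev.
have /eqP : t *: y = 0.
  apply: hsmall; first by rewrite yt_eq.
  rewrite normrZ gtr0_norm // /t mulrAC ltr_pdivrMr ?ltr_pwDr //.
  by rewrite ltr_pM2l // ltrDl.
by rewrite scaler_eq0 gt_eqF //= => /eqP.
Qed.

Lemma pdim_sumset : zero_isolated D -> pdim (sumset E D) = dimS E.
Proof.
move=> Diso; apply/eqP; rewrite eqn_leq; apply/andP; split.
  apply/bigmax_leqP => k /asboolP [V [hV [VED <-]]]; apply: dimS_subset.
  exact: subspace_sub_sumset.
have En : (dimS E < n.+1)%N by rewrite ltnS dimS_le_n.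
apply: (@leq_bigmax_cond _ _ (fun k : 'I_n.+1 => nat_of_ord k) (Ordinal En)).
by apply/asboolP; exists E; split=> //; split=> // x; exact: sumset_l.
Qed.

Lemma span_capv_eq0 {bE bD} : (forall x, x \in bE -> E x) -> is_basis D bD ->
  (<<bE>> :&: <<bD>> = 0)%VS.
Proof.
move=> bEE hbD; apply/eqP; rewrite -subv0; apply/subvP => v.
rewrite memv_cap memv0 => /andP[vE vD]; apply/eqP; apply: ED.
by split; [exact: subspace_span hE bEE vE | rewrite (vect_basis hbD)].
Qed.

Lemma dimS_sumset : dimS (sumset E D) = (dimS E + dimS D)%N.
Proof.
have [bE hbE] := basis_exists E; have [bD hbD] := basis_exists D.
rewrite (dimS_basis hbE) (dimS_basis hbD) -size_cat; have vectD := vect_basis hbD.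
case: hbE => bEE fbE EbE; case: hbD => bDD fbD DbD; apply: dimS_basis; split.
- by move=> x; rewrite mem_cat => /orP[/bEE|/bDD]; [exact: sumset_l | exact: sumset_r].
- by rewrite cat_free fbE fbD /=; apply/directv_addP; exact: span_capv_eq0.
- move=> _ [x [y [Ex [Dy ->]]]]; rewrite span_cat.
  by apply: memv_add; [exact: EbE | exact: DbD].
Qed.

Lemma decomp_projection : exists P : 'End(vec),
  (forall x, E x -> P x = x) /\ (forall y, vect D y -> P y = 0).
Proof.
have [bE [bEE _ EbE]] := basis_exists E; have [bD hbD] := basis_exists D.
have cap := span_capv_eq0 bEE hbD.
exists (daddv_pi <<bE>> <<bD>>); split=> [x /EbE|y]; first exact: daddv_pi_id.
rewrite (vect_basis hbD) => /= yD; have := daddv_pi_add cap (subvP (addvSr _ _) y yD).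
have capDE : (<<bD>> :&: <<bE>> = 0)%VS by rewrite capvC.
by rewrite (daddv_pi_id capDE yD) => /(canRL (addrK y)); rewrite subrr.
Qed.

(* The projection along [E] recovers the difference of the discrete components of
   two nearby points of [E + D]; it is a small element of [D], hence zero. *)
Lemma sumset_near_same_component : zero_isolated D ->
  exists2 delta : R, 0 < delta & forall x y x' y', E x -> D y -> E x' -> D y' ->
    `|(x + y) - (x' + y')| < delta -> y = y'.
Proof.
move=> [eps e0 hsmall]; have [P [PE PD]] := decomp_projection.
have [C C0 hC] := lfun_bounded P.
exists (eps / (1 + C)) => [|x y x' y' Ex Dy Ex' Dy']; first by rewrite divr_gt0 ?addr_gt0.
rewrite opprD addrACA; set w := _ + _ => wsmall.
apply/eqP; rewrite -subr_eq0; apply/eqP; apply: hsmall; first exact: subgroupB.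
have Pw : P w = x - x'.
  by rewrite [P w]linearD !linearB /= (PE x) // (PE x') // (PD y (mem_vect Dy)) (PD y' (mem_vect Dy')) subr0 addr0.
have -> : y - y' = w - P w by rewrite Pw /w addrAC subrr add0r.
apply: le_lt_trans (ler_normB _ _) _; apply: le_lt_trans (lerD (lexx _) (hC _)) _.
by rewrite -{1}[`|w|]mul1r -mulrDl mulrC -ltr_pdivlMr ?addr_gt0.
Qed.

Lemma sumset_closed : zero_isolated D -> closed (sumset E D).
Proof.
move=> Diso z zED; have [delta d0 near] := sumset_near_same_component Diso.
have d20 : 0 < delta / 2 by rewrite divr_gt0.
have [_ [x0 [y0 [Ex0 [Dy0 ->]]]] z_near0] := closure_approx zED _ d20.
suff Ezy0 : E (z - y0) by exists (z - y0), y0; rewrite subrK.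
apply: (subspace_closed hE); apply: approx_closure => e e0.
have min0 : 0 < Num.min e (delta / 2) by rewrite lt_min e0.
have [_ [x [y [Ex [Dy ->]]]]] := closure_approx zED _ min0.
rewrite lt_min => /andP[z_near z_near'].
have yy0 : y = y0.
  apply: (near x y x0 y0) => //; rewrite -(subrK z (x + y)) -addrA.
  apply: le_lt_trans (ler_normD _ _) _; rewrite [delta]splitr distrC.
  exact: ltrD.
by exists x => //; rewrite -yy0 addrAC -addrA -opprD.
Qed.

End Decomposition.

(** * Homomorphisms of closed additive groups *)

Section Homomorphism.
Context {E D E' D' : set vec} {f f1 f2 : vec -> vec}.
Context (hE : is_subspace E) (hD : is_add_subgroup D) (hf : is_cag_hom E D E' D' f f1 f2).

Let f1E' : forall x, E x -> E' (f1 x) := hf.1.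
Let f1lin : linear_on E f1 := hf.2.1.
Let f2D' : forall y, D y -> D' (f2 y) := hf.2.2.1.
Let f2add : additive_on D f2 := hf.2.2.2.1.

Lemma cag_hom_sum {x y} : E x -> D y -> f (x + y) = f1 x + f2 y.
Proof. by move=> Ex Dy; have := hf.2.2.2.2 1 1 x y Ex Dy; rewrite !scale1r !mulr1z. Qed.

Lemma cag_hom_l {x} : E x -> f x = f1 x.
Proof.
move=> Ex; have := cag_hom_sum Ex (subgroup0 hD).
by rewrite !addr0 (additive_on0 hD f2add) addr0.
Qed.

Lemma cag_hom_r {y} : D y -> f y = f2 y.
Proof.
have hEg := subspace_subgroup hE; move=> Dy; have := cag_hom_sum (subgroup0 hEg) Dy.
by rewrite !add0r (additive_on0 hEg (linear_on_additive f1lin)) add0r.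
Qed.

Lemma cag_hom0 : f 0 = 0.
Proof.
have hEg := subspace_subgroup hE.
by rewrite (cag_hom_l (subgroup0 hEg)) (additive_on0 hEg (linear_on_additive f1lin)).
Qed.

Lemma cag_hom_image : f @` sumset E D = sumset (f1 @` E) (f2 @` D).
Proof.
apply/seteqP; split=> [_ [_ [x [y [Ex [Dy ->]]]] <-] | _ [_ [_ [[x Ex <-] [[y Dy <-] ->]]]]].
- by exists (f1 x), (f2 y); rewrite cag_hom_sum.
- by exists (x + y); [exists x, y | rewrite cag_hom_sum].
Qed.

Lemma cag_homB u v : sumset E D u -> sumset E D v -> f (u - v) = f u - f v.
Proof.
have hEg := subspace_subgroup hE.
move=> [x [y [Ex [Dy ->]]]] [x' [y' [Ex' [Dy' ->]]]].
rewrite opprD addrACA (cag_hom_sum (subgroupB hEg Ex Ex') (subgroupB hD Dy Dy')) !cag_hom_sum //.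
rewrite (additive_onB hEg (linear_on_additive f1lin)) // (additive_onB hD f2add) //.
by rewrite opprD addrACA.
Qed.

Lemma cag_hom_image_closed : E' `&` vect D' `<=` [set 0] -> zero_isolated D' ->
  is_closed_subgroup (f @` sumset E D).
Proof.
move=> E'D' D'iso; rewrite cag_hom_image.
have hf1E := linear_on_image_subspace hE f1lin.
have hf2D := additive_on_image_subgroup hD f2add.
have f1E_E' : f1 @` E `<=` E' by move=> _ [x Ex <-]; exact: f1E'.
have f2D_D' : f2 @` D `<=` D' by move=> _ [y Dy <-]; exact: f2D'.
have cap0 : f1 @` E `&` vect (f2 @` D) `<=` [set 0].
  by move=> v [/f1E_E' E'v /(vect_subset f2D_D') D'v]; exact: E'D'.
split; first exact: sumset_subgroup.
exact: sumset_closed hf1E hf2D cap0 (zero_isolated_subset f2D_D' D'iso).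
Qed.

(* Nearby points of [E + D] have the same discrete component, so near [z] the map [f]
   differs from [f z] by [f1] applied to a small vector of [E]. *)
Lemma cag_hom_preimage_closed L : E `&` vect D `<=` [set 0] -> zero_isolated D ->
  is_closed_subgroup L -> is_closed_subgroup (sumset E D `&` f @^-1` L).
Proof.
have hEg := subspace_subgroup hE; have hED := sumset_subgroup hE hD.
move=> ED Diso [hL Lcl]; split.
  split=> [|u v [EDu Lfu] [EDv Lfv]].
    by split; [exact: subgroup0 hED | rewrite /= cag_hom0; exact: subgroup0 hL].
  by split; [exact: subgroupB hED EDu EDv | rewrite /= cag_homB //; exact: subgroupB].
move=> z zcl; have /sumset_closed : closure (sumset E D) z.
  by apply: closure_subset zcl => u [].
move=> /(_ hE hD ED Diso) EDz; split=> //; apply: Lcl; apply: approx_closure => e e0.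
have [x [y [Ex [Dy ez]]]] := EDz.
have [C C0 hC] := linear_on_bounded hE f1lin.
have [delta d0 near] := sumset_near_same_component hE hD ED Diso.
have eta0 : 0 < Num.min delta (e / C) by rewrite lt_min d0 divr_gt0.
have [u [[x' [y' [Ex' [Dy' eu]]]] Lfu] zu] := closure_approx zcl _ eta0.
move: zu; rewrite lt_min => /andP[zu_delta zu_e].
have yy' : y = y' by apply: (near x y x' y'); rewrite -?ez -?eu.
have zu : z - u = x - x' by rewrite ez eu -yy' opprD addrACA subrr addr0.
exists (f u) => //; rewrite ez eu -yy' !cag_hom_sum // opprD addrACA subrr addr0.
rewrite -(additive_onB hEg (linear_on_additive f1lin)) //.
apply: le_lt_trans (hC _ (subgroupB hEg Ex Ex')) _.
by rewrite -zu mulrC -ltr_pdivlMr.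
Qed.

Lemma cag_hom_inj_dimS : is_add_subgroup D' -> zero_isolated D' ->
  (forall u v, sumset E D u -> sumset E D v -> f u = f v -> u = v) ->
  (dimS E <= dimS E')%N /\ (dimS D <= dimS D')%N.
Proof.
move=> hD' D'iso finj; split.
  apply: (dimS_le_linear_inj hE f1lin f1E') => x x' Ex Ex' f1x.
  by apply: finj; [exact: sumset_l | exact: sumset_l | rewrite !cag_hom_l].
apply: (dimS_le_additive_inj hD f2add hD' D'iso f2D') => y y' Dy Dy' f2y.
by apply: finj; [exact: sumset_r | exact: sumset_r | rewrite !cag_hom_r].
Qed.

(* A preimage of [x' + y'] splits as [x + y] with [f1 x = x'] and [f2 y = y'], by
   uniqueness of the components in [E' + D']. *)
Lemma cag_hom_surj_dimS : is_subspace E' -> is_add_subgroup D' ->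
  E' `&` vect D' `<=` [set 0] -> zero_isolated D -> f @` sumset E D = sumset E' D' ->
  (dimS E' <= dimS E)%N /\ (dimS D' <= dimS D)%N.
Proof.
move=> hE' hD' E'D' Diso fsurj.
have lift x' y' : E' x' -> D' y' -> exists x y, [/\ E x, D y, f1 x = x' & f2 y = y'].
  move=> Ex' Dy'; have : sumset E' D' (x' + y') by exists x', y'.
  rewrite -fsurj => -[_ [x [y [Ex [Dy ->]]]]]; rewrite cag_hom_sum // => fxy.
  have [f1x f2y] := sumset_components_unique hE' E'D' (f1E' x Ex) Ex'
    (mem_vect (f2D' y Dy)) (mem_vect Dy') fxy.
  by exists x, y.
split.
  apply: (dimS_le_linear_surj hE f1lin) => x' Ex'.
  by have [x [y [Ex _ <- _]]] := lift x' 0 Ex' (subgroup0 hD'); exists x.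
apply: (dimS_le_additive_surj hD f2add Diso) => y' Dy'.
by have [x [y [_ Dy _ <-]]] := lift 0 y' (subgroup0 (subspace_subgroup hE')) Dy'; exists y.
Qed.

End Homomorphism.

End ClosedSubgroups.

Lemma normc_le_nat (R : realType) (a b a' b' : nat) : (a <= a')%N -> (b <= b')%N ->
  `|(a%:R +i* b%:R)%C| <= `|(a'%:R +i* b'%:R)%C| :> R[i].
Proof.
move=> aa' bb'; rewrite !normc_def /= lecR ler_sqrt ?addr_ge0 ?sqr_ge0 //.
by rewrite -!natrX -!natrD ler_nat leq_add // leq_sqr.
Qed.

Lemma dimt_decomp {R : realType} {n : nat} {H E D : set 'rV[R]_n} :
  is_decomp H E D -> dimt H = ((dimS E)%:R +i* (dimS D)%:R)%C.
Proof.
case=> hE [hD [ED ->]]; have ED' : E `&` vect D `<=` [set 0] by rewrite ED.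
rewrite /dimt (pdim_sumset hE hD.1 ED' (discrete_zero_isolated hD)).
by rewrite qdim_dimS (dimS_sumset hE hD.1 ED') natrD addrAC subrr add0r.
Qed.

Theorem theorem1p8 (R : realType) (n : nat)
    (H E D K E' D' : set 'rV[R]_n) (f f1 f2 : 'rV[R]_n -> 'rV[R]_n) :
  is_closed_subgroup H -> is_decomp H E D ->
  is_closed_subgroup K -> is_decomp K E' D' ->
  is_cag_hom E D E' D' f f1 f2 ->
  f @` H `<=` K ->
  [/\ ((forall x y, H x -> H y -> f x = f y -> x = y) ->
         `|dimt H| <= `|dimt K|),
      (f @` H = K -> `|dimt K| <= `|dimt H|),
      ((forall x y, H x -> H y -> f x = f y -> x = y) -> f @` H = K ->
         dimt H = dimt K),
      (is_closed_subgroup (f @` H) /\ f @` H `<=` K) &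
      (forall L : set 'rV[R]_n, is_closed_subgroup L -> L `<=` K ->
         is_closed_subgroup (H `&` f @^-1` L) /\ H `&` f @^-1` L `<=` H)].
Proof.
move=> _ hdH _ hdK hf; rewrite (dimt_decomp hdH) (dimt_decomp hdK).
case: hdH hdK => hE [hD [EDeq ->]] [hE' [hD' [E'D'eq ->]]] fHK.
have ED : E `&` vect D `<=` [set 0] by rewrite EDeq.
have E'D' : E' `&` vect D' `<=` [set 0] by rewrite E'D'eq.
have Diso := discrete_zero_isolated hD; have D'iso := discrete_zero_isolated hD'.
have dim_inj := cag_hom_inj_dimS hE hD.1 hf hD'.1 D'iso.
have dim_surj := cag_hom_surj_dimS hE hD.1 hf hE' hD'.1 E'D' Diso.
split.
- by move=> /dim_inj[? ?]; exact: normc_le_nat.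
- by move=> /dim_surj[? ?]; exact: normc_le_nat.
- move=> /dim_inj[? ?] /dim_surj[? ?].
  by congr (_%:R +i* _%:R)%C; apply/anti_leq/andP.
- by split=> //; exact: cag_hom_image_closed hE hD.1 hf E'D' D'iso.
- move=> L hL _; split; last by move=> x [].
  exact: cag_hom_preimage_closed hE hD.1 hf L ED Diso hL.
Qed.
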